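(* Let $\gamma>0$ and $\varepsilon>0$. In the setting below, the algorithm PrivTree$(D,\lambda,\theta,\delta)$ with any $\theta\in\mathbb{R}$, with $\lambda\ge \frac{2e^{\gamma}-1}{e^{\gamma}-1}\cdot\frac{1}{\varepsilon}$ and $\delta=\gamma\lambda$, satisfies $\varepsilon$-differential privacy (with respect to its output tree, which contains no counts).
   Context: $\mathrm{Lap}(\lambda)$ is the Laplace distribution with density $\frac{1}{2\lambda}e^{-|y|/\lambda}$. Setting: $\Omega$ is a domain and there is a fixed, data-independent hierarchical splitting scheme of fanout $\beta\ge 2$: an infinite rooted tree of candidate nodes in which every node $v$ has exactly $\beta$ children, each node $v$ carries a sub-domain $\mathrm{dom}(v)\subseteq\Omega$, the root $v_1$ has $\mathrm{dom}(v_1)=\Omega$, and the sub-domains of the $\beta$ children of $v$ partition $\mathrm{dom}(v)$. $\mathrm{depth}(v)$ is the hop distance from $v$ to the root. A dataset $D$ is a finite multiset of points of $\Omega$; $c(v)$ is the number of points of $D$ lying in $\mathrm{dom}(v)$. PrivTree$(D,\lambda,\theta,\delta)$ (with $\lambda>0$, $\theta\in\mathbb{R}$, $\delta>0$): start with the tree consisting only of the root, marked unvisited. While some node $v$ is unvisited: mark $v$ visited; set $b(v)=\max\{\theta-\delta,\ c(v)-\mathrm{depth}(v)\cdot\delta\}$; set $\hat b(v)=b(v)+\eta_v$ where $\eta_v\sim\mathrm{Lap}(\lambda)$ is drawn freshly and independently; if $\hat b(v)>\theta$, add all $\beta$ children of $v$ to the tree as unvisited nodes. The output is the resulting tree (its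 set of nodes with their sub-domains), with all counts $c,b,\hat b$ removed. Two datasets are neighboring if one is obtained from the other by inserting one point. An algorithm $\mathcal{A}$ is $\varepsilon$-differentially private if for all neighboring $D,D'$ and every possible output $O$, $\ln\big(\Pr[\mathcal{A}(D)=O]/\Pr[\mathcal{A}(D')=O]\big)\le\varepsilon$. *)

From Stdlib Require Import Reals Lra List Permutation.
Import ListNotations.
Open Scope R_scope.

(* Candidate nodes of the infinite beta-ary tree: a node is the path of child
   indices from the root (root = []). depth v = length v. *)
Definition node := list nat.

Definition depth (v : node) : nat := length v.

(* CDF of Lap(lambda): Pr[eta <= x] for eta with density (1/(2 lambda)) e^{-|y|/lambda}. *)
Definition lap_cdf (lam x : R) : R :=
  if Rlt_dec x 0 then / 2 * exp (x / lam) else 1 - / 2 * exp (- x / lam).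

Definition cnt {T : Type} (dom : node -> T -> bool) (D : list T) (v : node) : nat :=
  length (filter (dom v) D).

Definition bval {T : Type} (dom : node -> T -> bool) (D : list T)
  (theta delta : R) (v : node) : R :=
  Rmax (theta - delta) (INR (cnt dom D v) - INR (depth v) * delta).

(* Pr[ b(v) + eta_v > theta ], eta_v ~ Lap(lambda) *)
Definition split_prob {T : Type} (dom : node -> T -> bool) (D : list T)
  (lam theta delta : R) (v : node) : R :=
  1 - lap_cdf lam (theta - bval dom D theta delta v).

(* A possible output of PrivTree: a finite full beta-ary subtree containing the
   root, given as a duplicate-free list of nodes. *)
Definition valid_output (beta : nat) (O : list node) : Prop :=
  NoDup O /\ In [] O /\
  (forall v, In v O -> forall i, In i v -> (i < beta)%nat) /\
  (forall u i, In (u ++ [i]) O -> In u O) /\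
  (forall v, In v O -> (exists i, In (v ++ [i]) O) ->
     forall i, (i < beta)%nat -> In (v ++ [i]) O).

Definition node_in (v : node) (O : list node) : bool :=
  existsb (fun w => if list_eq_dec Nat.eq_dec v w then true else false) O.

(* v was split in output O iff its children are in O *)
Definition is_split (O : list node) (v : node) : bool := node_in (v ++ [0%nat]) O.

(* Pr[PrivTree(D, lambda, theta, delta) = O] for a valid finite output O:
   each node of O is visited exactly once with fresh independent noise; it is
   split iff its children belong to O. *)
Definition privtree_prob {T : Type} (dom : node -> T -> bool) (D : list T)
  (lam theta delta : R) (O : list node) : R :=
  fold_right Rmult 1
    (map (fun v => if is_split O v then split_prob dom D lam theta delta v
                   else 1 - split_prob dom D lam theta delta v) O).

(* Fixed data-independent hierarchical splitting scheme of fanout beta. *)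
Definition splitting_scheme {T : Type} (beta : nat) (dom : node -> T -> bool) : Prop :=
  (2 <= beta)%nat /\
  (forall x, dom [] x = true) /\
  (forall v i x, dom (v ++ [i]) x = true -> dom v x = true) /\
  (forall v x, dom v x = true ->
     exists i, (i < beta)%nat /\ dom (v ++ [i]) x = true /\
       forall j, (j < beta)%nat -> dom (v ++ [j]) x = true -> j = i).

(* The output probability of PrivTree is a product, over the nodes of the output,
   of Laplace probabilities F(±(b(v) - θ)), so the privacy loss is a sum over
   nodes of differences of G = ln F.  G is (1/λ)-Lipschitz, and on [0, ∞) its
   slope at t is at most e^{-t/λ}/λ.  Inserting or deleting a point changes b(v)
   by at most 1, and only at the nodes whose domain contains the point; in the
   output these form one root-to-leaf path.
   When the point is added to D, only the leaf of this path can lose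
   probability, at most a factor e^{1/λ}.  When it is removed from D, only the
   split nodes of the path lose probability, by G(b - θ) - G(b - 1 - θ) with
   b - θ >= -δ.  Since b(v) - θ drops by at least δ per level, the unit windows
   [b - 1 - θ, b - θ] along the path meet each cell [(k-1)δ, kδ] in total length
   at most 1; weighting cell k by the maximal slope of G on it gives the bound
   (1/λ)(1 + Σ_k e^{-kγ}) = (2e^γ - 1)/((e^γ - 1)λ) <= ε. *)

From Stdlib Require Import Reals Lra Lia List Permutation.
Import ListNotations.
Open Scope R_scope.

Lemma exp_le_compat x y : x <= y -> exp x <= exp y.
Proof. intros [H | ->]; [left; now apply exp_increasing | right; reflexivity]. Qed.

Lemma ln_le_compat x y : 0 < x -> x <= y -> ln x <= ln y.
Proof. intros Hx [H | ->]; [left; now apply ln_increasing | right; reflexivity]. Qed.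

Lemma ln_le_sub_1 z : 0 < z -> ln z <= z - 1.
Proof. intros Hz. pose proof (exp_ineq1_le (ln z)) as H. rewrite exp_ln in H; lra. Qed.

Lemma ln_div x y : 0 < x -> 0 < y -> ln (x / y) = ln x - ln y.
Proof.
  intros Hx Hy. unfold Rdiv.
  rewrite ln_mult, ln_Rinv; [ring | assumption | assumption | now apply Rinv_0_lt_compat].
Qed.

Lemma exp_neg_lt_1 g : 0 < g -> exp (- g) < 1.
Proof. intros. rewrite <- exp_0. apply exp_increasing. lra. Qed.

Lemma exp_INR_mult n a : exp (INR n * a) = exp a ^ n.
Proof. rewrite <- Rpower_pow by apply exp_pos. unfold Rpower. now rewrite ln_exp. Qed.

Ltac case_Rminmax :=
  unfold Rmax, Rmin;
  repeat match goal with
  | |- context [Rle_dec ?a ?b] =>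
      lazymatch constr:((a, b)) with
      | context [Rle_dec _ _] => fail
      | _ => destruct (Rle_dec a b)
      end
  end.

Lemma sum_f_R0_telescope (f : nat -> R) N :
  sum_f_R0 (fun n => f n - f (S n)) N = f O - f (S N).
Proof. induction N as [|N IH]; simpl; [reflexivity | rewrite IH; ring]. Qed.

Lemma sum_f_R0_swap (f : nat -> nat -> R) N J :
  sum_f_R0 (fun n => sum_f_R0 (f n) J) N = sum_f_R0 (fun j => sum_f_R0 (fun n => f n j) N) J.
Proof.
  induction N as [|N IH]; [reflexivity |].
  rewrite tech5, IH, <- plus_sum. reflexivity.
Qed.

Definition rsum {A : Type} (f : A -> R) (l : list A) : R :=
  fold_right (fun a s => f a + s) 0 l.

Section ListSums.
Variable A : Type.

Lemma rsum_ext (f g : A -> R) l : (forall a, In a l -> f a = g a) -> rsum f l = rsum g l.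
Proof.
  induction l as [|a l IH]; intros H; simpl; [reflexivity |].
  rewrite H, IH; auto with datatypes.
Qed.

Lemma rsum_le (f g : A -> R) l : (forall a, In a l -> f a <= g a) -> rsum f l <= rsum g l.
Proof.
  induction l as [|a l IH]; intros H; simpl; [lra |].
  pose proof (H a (or_introl eq_refl)). pose proof (IH (fun b Hb => H b (or_intror Hb))). lra.
Qed.

Lemma rsum_plus (f g : A -> R) l : rsum (fun a => f a + g a) l = rsum f l + rsum g l.
Proof. induction l as [|a l IH]; simpl; [ring | rewrite IH; ring]. Qed.

Lemma rsum_0 (f : A -> R) l : (forall a, In a l -> f a = 0) -> rsum f l = 0.
Proof.
  induction l as [|a l IH]; intros H; simpl; [reflexivity |].
  rewrite H, IH; auto with datatypes. ring.
Qed.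

Lemma rsum_at_most_one (P : A -> bool) (f : A -> R) l c :
  NoDup l ->
  (forall a b, In a l -> In b l -> P a = true -> P b = true -> a = b) ->
  (forall a, In a l -> P a = true -> f a <= c) -> 0 <= c ->
  rsum (fun a => if P a then f a else 0) l <= c.
Proof.
  induction l as [|a l IH]; intros Hnodup Huniq Hf Hc; simpl; [lra |].
  apply NoDup_cons_iff in Hnodup as [Ha Hnodup].
  destruct (P a) eqn:Pa.
  - rewrite rsum_0; [pose proof (Hf a (or_introl eq_refl) Pa); lra |].
    intros b Hb. destruct (P b) eqn:Pb; [| reflexivity].
    exfalso. apply Ha. rewrite (Huniq a b); auto with datatypes.
  - enough (rsum (fun a => if P a then f a else 0) l <= c) by lra.
    apply IH; auto with datatypes.
Qed.

Lemma rsum_by_level (k : A -> nat) (P : A -> bool) (f : A -> R) l N :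
  (forall a, In a l -> (k a <= N)%nat) ->
  rsum (fun a => if P a then f a else 0) l
  = sum_f_R0 (fun n => rsum (fun a => if (Nat.eqb (k a) n && P a)%bool then f a else 0) l) N.
Proof.
  intros Hk.
  assert (Hcut : forall M, rsum (fun a => if (Nat.leb (k a) M && P a)%bool then f a else 0) l
    = sum_f_R0 (fun n => rsum (fun a => if (Nat.eqb (k a) n && P a)%bool then f a else 0) l) M).
  { induction M as [|M IH]; simpl.
    - apply rsum_ext. intros a _. now destruct (k a).
    - rewrite <- IH, <- rsum_plus. apply rsum_ext. intros a _.
      destruct (Nat.leb_spec (k a) (S M)), (Nat.leb_spec (k a) M), (Nat.eqb_spec (k a) (S M));
        destruct (P a); simpl; lia || lra. }
  rewrite <- Hcut. apply rsum_ext. intros a Ha.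
  now rewrite (proj2 (Nat.leb_le _ _) (Hk a Ha)).
Qed.

Lemma ln_prod_div (f g : A -> R) l : (forall a, 0 < f a) -> (forall a, 0 < g a) ->
  ln (fold_right Rmult 1 (map f l) / fold_right Rmult 1 (map g l))
  = rsum (fun a => ln (f a) - ln (g a)) l.
Proof.
  intros Hf Hg.
  assert (Hprod : forall h : A -> R, (forall a, 0 < h a) -> forall l, 0 < fold_right Rmult 1 (map h l)).
  { intros h Hh l'. induction l' as [|a l' IH]; simpl; [lra | now apply Rmult_lt_0_compat]. }
  induction l as [|a l IH]; simpl.
  - unfold Rdiv. rewrite Rinv_1, Rmult_1_l. apply ln_1.
  - rewrite ln_div, !ln_mult, <- IH, ln_div by (repeat apply Rmult_lt_0_compat; auto). ring.
Qed.

End ListSums.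

Definition clamp (w z : R) : R := Rmax 0 (Rmin z w).

Lemma clamp_nonneg w z : 0 <= clamp w z.
Proof. apply Rmax_l. Qed.

Lemma clamp_le w z : 0 <= w -> clamp w z <= w.
Proof. intros. unfold clamp. case_Rminmax; lra. Qed.

Lemma clamp_le_compat w a b : a <= b -> clamp w a <= clamp w b.
Proof. intros. unfold clamp. case_Rminmax; lra. Qed.

Lemma clamp_nonpos w z : z <= 0 -> clamp w z = 0.
Proof. intros. unfold clamp. case_Rminmax; lra. Qed.

Lemma clamp_full w z : 0 <= w -> w <= z -> clamp w z = w.
Proof. intros. unfold clamp. case_Rminmax; lra. Qed.

Lemma clamp_id w z : 0 <= z <= w -> clamp w z = z.
Proof. intros. unfold clamp. case_Rminmax; lra. Qed.

(* [clamp w z] is the length of [0, w] ∩ (-∞, z], so the two sides are the lengths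
   of [0, d] ∩ [z - 1, z] and of its mirror image [z - d, z] ∩ [0, 1] under t ↦ z - t. *)
Lemma clamp_swap d z : 0 < d -> clamp d z - clamp d (z - 1) = clamp 1 z - clamp 1 (z - d).
Proof. intros. unfold clamp. case_Rminmax; lra. Qed.

Lemma sum_clamp_decreasing_le d (u : nat -> R) N : 0 < d -> (forall n, u (S n) <= u n - d) ->
  sum_f_R0 (fun n => clamp d (u n) - clamp d (u n - 1)) N <= 1.
Proof.
  intros Hd Hu.
  rewrite (sum_eq _ (fun n => clamp 1 (u n) - clamp 1 (u n - d))) by (intros; now apply clamp_swap).
  apply Rle_trans with (sum_f_R0 (fun n => clamp 1 (u n) - clamp 1 (u (S n))) N).
  - apply sum_Rle. intros n _. pose proof (clamp_le_compat 1 _ _ (Hu n)). lra.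
  - rewrite sum_f_R0_telescope.
    pose proof (clamp_le 1 (u O) ltac:(lra)). pose proof (clamp_nonneg 1 (u (S N))). lra.
Qed.

(** * The Laplace distribution *)

Section Laplace.
Variable lam : R.
Hypothesis lam_pos : 0 < lam.

Lemma div_lam_le_compat a b : a <= b -> a / lam <= b / lam.
Proof. intros. unfold Rdiv. apply Rmult_le_compat_r; [left; now apply Rinv_0_lt_compat | assumption]. Qed.

Lemma exp_neg_div_le_1 t : 0 <= t -> exp (- t / lam) <= 1.
Proof.
  intros Ht. rewrite <- exp_0. apply exp_le_compat.
  pose proof (div_lam_le_compat 0 t Ht). unfold Rdiv in *. lra.
Qed.

Lemma lap_cdf_nonneg_arg t : 0 <= t -> lap_cdf lam t = 1 - / 2 * exp (- t / lam).
Proof. intros. unfold lap_cdf. destruct (Rlt_dec t 0); [lra | reflexivity]. Qed.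

Lemma lap_cdf_pos t : 0 < lap_cdf lam t.
Proof.
  destruct (Rlt_dec t 0) as [Ht | Ht].
  - unfold lap_cdf. destruct (Rlt_dec t 0); [| contradiction]. pose proof (exp_pos (t / lam)). lra.
  - rewrite lap_cdf_nonneg_arg by lra. pose proof (exp_neg_div_le_1 t ltac:(lra)). lra.
Qed.

Lemma lap_cdf_opp t : 1 - lap_cdf lam t = lap_cdf lam (- t).
Proof.
  unfold lap_cdf. destruct (Rlt_dec t 0), (Rlt_dec (- t) 0); try lra.
  - rewrite Ropp_involutive. ring.
  - replace t with 0 by lra. rewrite !Ropp_0. unfold Rdiv. rewrite Rmult_0_l, exp_0. lra.
Qed.

Lemma lap_cdf_le x y : x <= y -> lap_cdf lam x <= lap_cdf lam y.
Proof.
  intros Hxy. unfold lap_cdf. destruct (Rlt_dec x 0), (Rlt_dec y 0); try lra.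
  - pose proof (exp_le_compat _ _ (div_lam_le_compat x y Hxy)). lra.
  - pose proof (exp_le_compat _ _ (div_lam_le_compat x 0 ltac:(lra))).
    pose proof (exp_neg_div_le_1 y ltac:(lra)).
    unfold Rdiv in *. rewrite Rmult_0_l, exp_0 in *. lra.
  - pose proof (exp_le_compat _ _ (div_lam_le_compat (- y) (- x) ltac:(lra))). lra.
Qed.

Definition lap_logcdf (t : R) : R := ln (lap_cdf lam t).

Lemma lap_logcdf_le x y : x <= y -> lap_logcdf x <= lap_logcdf y.
Proof. intros. apply ln_le_compat; [apply lap_cdf_pos | now apply lap_cdf_le]. Qed.

Lemma lap_logcdf_nonpos t : t <= 0 -> lap_logcdf t = ln (/ 2) + t / lam.
Proof.
  intros Ht. unfold lap_logcdf, lap_cdf. destruct (Rlt_dec t 0).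
  - rewrite ln_mult, ln_exp; [reflexivity | lra | apply exp_pos].
  - replace t with 0 by lra. unfold Rdiv. rewrite Ropp_0, !Rmult_0_l, exp_0, Rplus_0_r.
    f_equal. lra.
Qed.

(* ln F(y) - ln F(x) <= F(y)/F(x) - 1 <= 2 (F(y) - F(x)) = e^{-x/λ} (1 - e^{-(y-x)/λ}). *)
Lemma lap_logcdf_incr_nonneg x y : 0 <= x <= y ->
  lap_logcdf y - lap_logcdf x <= exp (- x / lam) * ((y - x) / lam).
Proof.
  intros [Hx Hxy]. unfold lap_logcdf.
  rewrite <- ln_div by apply lap_cdf_pos.
  rewrite !lap_cdf_nonneg_arg by lra.
  set (ex := exp (- x / lam)). set (r := exp (- ((y - x) / lam))).
  assert (Hey : exp (- y / lam) = ex * r).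
  { unfold ex, r. rewrite <- exp_plus. f_equal. field. lra. }
  rewrite Hey.
  assert (ex_pos : 0 < ex) by apply exp_pos.
  assert (ex_le_1 : ex <= 1) by now apply exp_neg_div_le_1.
  assert (r_le_1 : r <= 1).
  { unfold r. replace (- ((y - x) / lam)) with (- (y - x) / lam) by (field; lra).
    apply exp_neg_div_le_1. lra. }
  assert (r_ge : 1 - (y - x) / lam <= r) by (unfold r; pose proof (exp_ineq1_le (- ((y - x) / lam))); lra).
  assert (Hfx : / 2 <= 1 - / 2 * ex) by lra.
  eapply Rle_trans; [apply ln_le_sub_1; apply Rdiv_lt_0_compat; nra |].
  replace ((1 - / 2 * (ex * r)) / (1 - / 2 * ex) - 1)
    with (/ 2 * (ex * (1 - r)) / (1 - / 2 * ex)) by (field; lra).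
  apply Rle_trans with (ex * (1 - r)); [| nra].
  apply (Rmult_le_reg_r (1 - / 2 * ex)); [lra |].
  assert (0 <= ex * (1 - r)) by nra.
  unfold Rdiv. rewrite Rmult_assoc, Rinv_l by lra. nra.
Qed.

Lemma lap_logcdf_incr x y : x <= y -> lap_logcdf y - lap_logcdf x <= (y - x) / lam.
Proof.
  intros Hxy.
  assert (Hpos : forall a b, 0 <= a <= b -> lap_logcdf b - lap_logcdf a <= (b - a) / lam).
  { intros a b Hab. pose proof (lap_logcdf_incr_nonneg a b Hab).
    pose proof (exp_neg_div_le_1 a ltac:(lra)). pose proof (div_lam_le_compat 0 (b - a) ltac:(lra)).
    unfold Rdiv in *. rewrite Rmult_0_l in *. nra. }
  destruct (Rle_dec y 0); [| destruct (Rle_dec 0 x)].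
  - rewrite !lap_logcdf_nonpos by lra. unfold Rdiv. lra.
  - now apply Hpos.
  - pose proof (Hpos 0 y ltac:(lra)) as H0y.
    rewrite (lap_logcdf_nonpos 0) in H0y by lra. rewrite (lap_logcdf_nonpos x) by lra.
    unfold Rdiv in *. lra.
Qed.

Definition signed (s : bool) (t : R) : R := if s then t else - t.

Lemma lap_logcdf_signed_le s a b : a <= b ->
  lap_logcdf (signed s b) - lap_logcdf (signed s a) <= lap_logcdf b - lap_logcdf a.
Proof.
  intros Hab. destruct s; simpl; [lra |].
  pose proof (lap_logcdf_le (- b) (- a) ltac:(lra)). pose proof (lap_logcdf_le a b Hab). lra.
Qed.

Lemma lap_logcdf_signed_ge s a b : a <= b <= a + 1 ->
  lap_logcdf (signed s a) - lap_logcdf (signed s b) <= if s then 0 else / lam.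
Proof.
  intros [Hab Hba]. destruct s; simpl.
  - pose proof (lap_logcdf_le a b Hab). lra.
  - pose proof (lap_logcdf_incr (- b) (- a) ltac:(lra)).
    pose proof (div_lam_le_compat (- a - - b) 1 ltac:(lra)). unfold Rdiv in *. lra.
Qed.

Section Cells.
Variable d : R.
Hypothesis d_pos : 0 < d.

(* Cell [j] is [[cell_lo j, cell_lo j + d]]; [cell_slope j] bounds the slope of
   [lap_logcdf] on it, and [cell_potential J] is the piecewise-linear function
   with these slopes on the cells covering [[-d, J d]]. *)
Definition cell_lo (j : nat) : R := (INR j - 1) * d.

Definition cell_slope (j : nat) : R :=
  match j with O => / lam | S i => exp (- d / lam) ^ i / lam end.

Definition cell_potential (J : nat) (z : R) : R :=
  sum_f_R0 (fun j => cell_slope j * clamp d (z - cell_lo j)) J.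

Lemma cell_slope_nonneg j : 0 <= cell_slope j.
Proof.
  destruct j; simpl; left; [now apply Rinv_0_lt_compat |].
  apply Rdiv_lt_0_compat; [apply pow_lt, exp_pos | assumption].
Qed.

Lemma lap_logcdf_incr_cell j x y : cell_lo j <= x -> x <= y -> y <= cell_lo j + d ->
  lap_logcdf y - lap_logcdf x <= cell_slope j * (y - x).
Proof.
  intros Hlo Hxy Hhi. destruct j as [|i].
  - pose proof (lap_logcdf_incr x y Hxy). simpl. unfold Rdiv in *. lra.
  - assert (Hlo' : cell_lo (S i) = INR i * d) by (unfold cell_lo; rewrite S_INR; ring).
    assert (0 <= INR i * d) by (pose proof (pos_INR i); nra).
    pose proof (lap_logcdf_incr_nonneg x y ltac:(lra)) as Hinc.
    assert (Hexp : exp (- x / lam) <= exp (- d / lam) ^ i).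
    { rewrite <- exp_INR_mult. apply exp_le_compat.
      replace (INR i * (- d / lam)) with (- (INR i * d) / lam) by (field; lra).
      apply div_lam_le_compat. lra. }
    pose proof (div_lam_le_compat 0 (y - x) ltac:(lra)).
    simpl. unfold Rdiv in *. rewrite Rmult_0_l in *. nra.
Qed.

Lemma cell_potential_full J z : INR J * d <= z ->
  cell_potential J z = sum_f_R0 (fun j => cell_slope j * d) J.
Proof.
  intros Hz. apply sum_eq. intros j Hj. f_equal. apply clamp_full; [lra |].
  apply le_INR in Hj. unfold cell_lo. nra.
Qed.

Lemma cell_potential_Rmax J z : cell_potential J (Rmax (- d) z) = cell_potential J z.
Proof.
  unfold Rmax. destruct (Rle_dec (- d) z); [reflexivity |].
  apply sum_eq. intros j _. pose proof (pos_INR j). unfold cell_lo.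
  rewrite !clamp_nonpos by nra. reflexivity.
Qed.

Lemma lap_logcdf_incr_le_potential J x y : - d <= x -> x <= y -> y <= INR J * d ->
  lap_logcdf y - lap_logcdf x <= cell_potential J y - cell_potential J x.
Proof.
  revert x y. induction J as [|J IH]; intros x y Hx Hxy Hy.
  - assert (Hlo : cell_lo O = - d) by (unfold cell_lo; simpl; ring).
    simpl INR in Hy.
    pose proof (lap_logcdf_incr_cell O x y ltac:(lra) Hxy ltac:(lra)) as Hcell.
    unfold cell_potential. simpl. rewrite Hlo, !clamp_id by lra. simpl in Hcell. lra.
  - assert (Hstep : forall z, cell_potential (S J) z
      = cell_potential J z + cell_slope (S J) * clamp d (z - INR J * d)).
    { intros z. unfold cell_potential. rewrite tech5. unfold cell_lo. rewrite S_INR.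
      replace ((INR J + 1 - 1) * d) with (INR J * d) by ring. reflexivity. }
    assert (Hlow : forall a b, - d <= a -> a <= b -> b <= INR J * d ->
      lap_logcdf b - lap_logcdf a <= cell_potential (S J) b - cell_potential (S J) a).
    { intros a b Ha Hab Hb. rewrite !Hstep, !(clamp_nonpos d) by lra.
      pose proof (IH a b Ha Hab Hb). lra. }
    assert (Hhigh : forall a b, INR J * d <= a -> a <= b -> b <= INR (S J) * d ->
      lap_logcdf b - lap_logcdf a <= cell_potential (S J) b - cell_potential (S J) a).
    { intros a b Ha Hab Hb. rewrite S_INR in Hb.
      rewrite !Hstep, !cell_potential_full, !(clamp_id d) by lra.
      pose proof (lap_logcdf_incr_cell (S J) a b) as Hcell.
      unfold cell_lo in Hcell. rewrite S_INR in Hcell.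
      enough (lap_logcdf b - lap_logcdf a <= cell_slope (S J) * (b - a)) by lra.
      apply Hcell; lra. }
    destruct (Rle_dec y (INR J * d)); [now apply Hlow |].
    destruct (Rle_dec (INR J * d) x); [now apply Hhigh |].
    pose proof (pos_INR J).
    pose proof (Hlow x (INR J * d) Hx ltac:(lra) ltac:(lra)).
    pose proof (Hhigh (INR J * d) y ltac:(lra) ltac:(lra) Hy). lra.
Qed.

Lemma sum_cell_slope_le J : sum_f_R0 cell_slope J <= (1 + / (1 - exp (- d / lam))) / lam.
Proof.
  set (q := exp (- d / lam)).
  assert (q_lt_1 : q < 1).
  { unfold q. replace (- d / lam) with (- (d / lam)) by (field; lra).
    apply exp_neg_lt_1, Rdiv_lt_0_compat; assumption. }
  assert (q_pos : 0 < q) by apply exp_pos.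
  assert (Hgeom : sum_f_R0 (fun i => q ^ i) J <= / (1 - q)).
  { rewrite tech3 by lra. pose proof (pow_lt q (S J) q_pos). unfold Rdiv.
    rewrite <- (Rmult_1_l (/ (1 - q))) at 2.
    apply Rmult_le_compat_r; [left; apply Rinv_0_lt_compat |]; lra. }
  apply Rle_trans with (sum_f_R0 cell_slope (S J)).
  { rewrite tech5. pose proof (cell_slope_nonneg (S J)). lra. }
  rewrite decomp_sum by lia. simpl pred.
  rewrite (sum_eq _ (fun i => q ^ i * / lam)) by reflexivity.
  rewrite <- scal_sum. simpl cell_slope.
  assert (/ lam * sum_f_R0 (fun i => q ^ i) J <= / lam * / (1 - q)).
  { apply Rmult_le_compat_l; [left; now apply Rinv_0_lt_compat | exact Hgeom]. }
  change (sum_f_R0 (pow q) J) with (sum_f_R0 (fun i => q ^ i) J). unfold Rdiv. lra.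
Qed.

(* The windows [u n - 1, u n] meet each cell in total length at most 1
   ([sum_clamp_decreasing_le]), so the sum is at most the sum of the slopes. *)
Lemma sum_lap_logcdf_decreasing_le (u : nat -> R) N : (forall n, u (S n) <= u n - d) ->
  sum_f_R0 (fun n => lap_logcdf (Rmax (- d) (u n)) - lap_logcdf (Rmax (- d) (u n - 1))) N
  <= (1 + / (1 - exp (- d / lam))) / lam.
Proof.
  intros Hu.
  destruct (INR_archimed d (u O) d_pos) as [J HJ].
  assert (u_le : forall n, u n <= u O).
  { induction n as [|n IH]; [lra | pose proof (Hu n); lra]. }
  apply Rle_trans with (sum_f_R0 (fun n => cell_potential J (u n) - cell_potential J (u n - 1)) N).
  { apply sum_Rle. intros n _.
    rewrite <- (cell_potential_Rmax J (u n)), <- (cell_potential_Rmax J (u n - 1)).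
    pose proof (pos_INR J). pose proof (u_le n).
    apply lap_logcdf_incr_le_potential;
      [apply Rmax_l | apply Rle_max_compat_l; lra | apply Rmax_lub; nra]. }
  apply Rle_trans with (sum_f_R0 cell_slope J); [| apply sum_cell_slope_le].
  unfold cell_potential.
  rewrite (sum_eq _ (fun n => sum_f_R0 (fun j =>
      (clamp d (u n - cell_lo j) - clamp d (u n - cell_lo j - 1)) * cell_slope j) J)).
  2: { intros n _. rewrite <- minus_sum. apply sum_eq. intros j _.
       replace (u n - 1 - cell_lo j) with (u n - cell_lo j - 1) by ring. ring. }
  rewrite sum_f_R0_swap. apply sum_Rle. intros j _.
  rewrite <- scal_sum. rewrite <- (Rmult_1_r (cell_slope j)) at 2.
  apply Rmult_le_compat_l; [apply cell_slope_nonneg |].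
  apply (sum_clamp_decreasing_le d (fun n => u n - cell_lo j)); [assumption |].
  intros n. pose proof (Hu n). lra.
Qed.

End Cells.
End Laplace.

(** * Nodes containing a point *)

Lemma Permutation_filter {A : Type} (f : A -> bool) l l' :
  Permutation l l' -> Permutation (filter f l) (filter f l').
Proof.
  induction 1; simpl.
  - constructor.
  - destruct (f x); auto.
  - destruct (f x), (f y); auto. apply perm_swap.
  - eapply Permutation_trans; eassumption.
Qed.

Lemma cnt_insert {T : Type} (dom : node -> T -> bool) D D' x v :
  Permutation D' (x :: D) -> INR (cnt dom D' v) = INR (cnt dom D v) + (if dom v x then 1 else 0).
Proof.
  intros Hperm. unfold cnt.
  rewrite (Permutation_length (Permutation_filter (dom v) _ _ Hperm)). simpl.
  destruct (dom v x); simpl length; [rewrite S_INR |]; ring.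
Qed.

Lemma cnt_le_subdomain {T : Type} (dom : node -> T -> bool) D v w :
  (forall y, dom w y = true -> dom v y = true) -> (cnt dom D w <= cnt dom D v)%nat.
Proof.
  intros Hsub. unfold cnt. induction D as [|a D IH]; simpl; [lia |].
  destruct (dom w a) eqn:Hw; [rewrite (Hsub a Hw); simpl; lia |].
  destruct (dom v a); simpl; lia.
Qed.

Lemma node_in_In v O : node_in v O = true <-> In v O.
Proof.
  unfold node_in. rewrite existsb_exists. split.
  - intros [w [Hw E]]. destruct (list_eq_dec Nat.eq_dec v w); [now subst | discriminate].
  - intros H. exists v. split; [assumption |]. now destruct (list_eq_dec Nat.eq_dec v v).
Qed.

Section PointPath.
Variables (T : Type) (beta : nat) (dom : node -> T -> bool) (x : T).
Hypothesis scheme : splitting_scheme beta dom.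

(* The child of [v] whose domain contains [x]; [0] when there is none. *)
Definition x_branch (v : node) : nat :=
  match find (fun i => dom (v ++ [i]) x) (seq 0 beta) with Some i => i | None => 0%nat end.

Fixpoint x_path (n : nat) : node :=
  match n with O => [] | S m => x_path m ++ [x_branch (x_path m)] end.

Lemma x_branch_unique v i : (i < beta)%nat -> dom (v ++ [i]) x = true -> i = x_branch v.
Proof.
  intros Hi Hdi. destruct scheme as [_ [_ [Hparent Hpart]]].
  destruct (Hpart v x (Hparent _ _ _ Hdi)) as [k [_ [_ Huniq]]].
  unfold x_branch. destruct (find (fun i => dom (v ++ [i]) x) (seq 0 beta)) as [j|] eqn:E.
  - apply find_some in E as [Hj Hdj]. apply in_seq in Hj.
    rewrite (Huniq i Hi Hdi), (Huniq j ltac:(lia) Hdj). reflexivity.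
  - pose proof (find_none _ _ E i) as Hnone. rewrite in_seq in Hnone.
    rewrite Hnone in Hdi by lia. discriminate.
Qed.

Lemma x_path_length n : length (x_path n) = n.
Proof. induction n as [|n IH]; simpl; [reflexivity | rewrite length_app, IH; simpl; lia]. Qed.

Variable O : list node.
Hypothesis O_valid : valid_output beta O.

Lemma output_x_node v : In v O -> dom v x = true -> v = x_path (length v).
Proof.
  induction v as [|i v IH] using rev_ind; intros Hin Hdom; [reflexivity |].
  destruct O_valid as [_ [_ [Hbeta [Hprefix _]]]]. destruct scheme as [_ [_ [Hparent _]]].
  assert (Hv : dom v x = true) by (eapply Hparent; eassumption).
  assert (Hi : (i < beta)%nat) by (apply (Hbeta _ Hin); auto with datatypes).
  rewrite length_app, Nat.add_1_r. simpl. rewrite <- (IH (Hprefix _ _ Hin) Hv).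
  f_equal. f_equal. now apply x_branch_unique.
Qed.

Lemma x_path_in_prefix m n : In (x_path m) O -> (n <= m)%nat -> In (x_path n) O.
Proof.
  destruct O_valid as [_ [_ [_ [Hprefix _]]]].
  induction m as [|m IH]; intros Hm Hnm.
  - now replace n with 0%nat by lia.
  - destruct (Nat.eq_dec n (S m)) as [-> | Hne]; [assumption |].
    apply IH; [exact (Hprefix _ _ Hm) | lia].
Qed.

Lemma x_path_split m n : In (x_path m) O -> (n < m)%nat -> is_split O (x_path n) = true.
Proof.
  intros Hm Hnm. destruct O_valid as [_ [_ [_ [_ Hfull]]]]. destruct scheme as [Hbeta _].
  apply node_in_In, Hfull; [apply (x_path_in_prefix m); [assumption | lia] | | lia].
  exists (x_branch (x_path n)). exact (x_path_in_prefix m (S n) Hm Hnm).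
Qed.

Lemma unsplit_x_node_unique v w : In v O -> In w O -> dom v x = true -> dom w x = true ->
  is_split O v = false -> is_split O w = false -> v = w.
Proof.
  intros Hv Hw Dv Dw Sv Sw.
  pose proof (output_x_node v Hv Dv) as Ev. pose proof (output_x_node w Hw Dw) as Ew.
  rewrite Ev in Hv, Sv. rewrite Ew in Hw, Sw. rewrite Ev, Ew.
  destruct (Nat.lt_total (length v) (length w)) as [Hlt | [-> | Hlt]]; [| reflexivity |].
  - rewrite (x_path_split _ _ Hw Hlt) in Sv. discriminate.
  - rewrite (x_path_split _ _ Hv Hlt) in Sw. discriminate.
Qed.

Lemma rsum_x_nodes_le (h : node -> R) N : (forall v, 0 <= h v) ->
  (forall v, In v O -> (length v <= N)%nat) ->
  rsum (fun v => if dom v x then h v else 0) O <= sum_f_R0 (fun n => h (x_path n)) N.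
Proof.
  intros Hh Hlen. rewrite (rsum_by_level _ (@length nat) _ _ _ N Hlen).
  apply sum_Rle. intros n _.
  assert (Hat : forall v, In v O -> (Nat.eqb (length v) n && dom v x)%bool = true -> v = x_path n).
  { intros v Hv Pv. apply andb_prop in Pv as [Hn Hd]. apply Nat.eqb_eq in Hn.
    rewrite (output_x_node v Hv Hd). now f_equal. }
  apply rsum_at_most_one; [apply O_valid | | | apply Hh].
  - intros v w Hv Hw Pv Pw. now rewrite (Hat v Hv Pv), (Hat w Hw Pw).
  - intros v Hv Pv. rewrite (Hat v Hv Pv). lra.
Qed.

End PointPath.

(** * Privacy loss of PrivTree *)

Section PrivTree.
Variables (T : Type) (beta : nat) (dom : node -> T -> bool) (lam theta delta : R).
Hypothesis scheme : splitting_scheme beta dom.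
Hypothesis lam_pos : 0 < lam.

Lemma bval_insert D D' x v : Permutation D' (x :: D) ->
  bval dom D theta delta v <= bval dom D' theta delta v
  <= bval dom D theta delta v + (if dom v x then 1 else 0).
Proof.
  intros Hperm. unfold bval. rewrite (cnt_insert dom D D' x v Hperm).
  destruct (dom v x); case_Rminmax; lra.
Qed.

Lemma bval_sub_theta D v :
  bval dom D theta delta v - theta = Rmax (- delta) (INR (cnt dom D v) - INR (depth v) * delta - theta).
Proof. unfold bval. case_Rminmax; lra. Qed.

Definition node_loss (D D' : list T) (O : list node) (v : node) : R :=
  lap_logcdf lam (signed (is_split O v) (bval dom D theta delta v - theta))
  - lap_logcdf lam (signed (is_split O v) (bval dom D' theta delta v - theta)).

Lemma privtree_log_ratio D D' O :
  ln (privtree_prob dom D lam theta delta O / privtree_prob dom D' lam theta delta O)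
  = rsum (node_loss D D' O) O.
Proof.
  assert (Hfactor : forall D0 v, (if is_split O v then split_prob dom D0 lam theta delta v
                                  else 1 - split_prob dom D0 lam theta delta v)
    = lap_cdf lam (signed (is_split O v) (bval dom D0 theta delta v - theta))).
  { intros D0 v. unfold split_prob, signed. destruct (is_split O v).
    - rewrite lap_cdf_opp. f_equal. ring.
    - rewrite Ropp_minus_distr. ring. }
  unfold privtree_prob. rewrite !(map_ext _ _ (Hfactor _)).
  apply ln_prod_div; intros; apply lap_cdf_pos; assumption.
Qed.

Lemma privtree_loss_insert D D' x O : valid_output beta O -> Permutation D' (x :: D) ->
  ln (privtree_prob dom D lam theta delta O / privtree_prob dom D' lam theta delta O) <= / lam.
Proof.
  intros O_valid Hperm. rewrite privtree_log_ratio.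
  apply Rle_trans with (rsum (fun v => if (dom v x && negb (is_split O v))%bool then / lam else 0) O).
  - apply rsum_le. intros v _. unfold node_loss.
    pose proof (bval_insert D D' x v Hperm) as Hb.
    destruct (dom v x); simpl.
    + pose proof (lap_logcdf_signed_ge lam lam_pos (is_split O v)
        (bval dom D theta delta v - theta) (bval dom D' theta delta v - theta) ltac:(lra)).
      destruct (is_split O v); simpl in *; lra.
    + replace (bval dom D' theta delta v) with (bval dom D theta delta v) by lra. lra.
  - apply rsum_at_most_one; [apply O_valid | | intros; lra | left; now apply Rinv_0_lt_compat].
    intros v w Hv Hw Pv Pw.
    apply andb_prop in Pv as [Dv Sv]. apply andb_prop in Pw as [Dw Sw].
    apply Bool.negb_true_iff in Sv, Sw.
    exact (unsplit_x_node_unique T beta dom x scheme O O_valid v w Hv Hw Dv Dw Sv Sw).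
Qed.

Hypothesis delta_pos : 0 < delta.

Lemma privtree_loss_remove D D' x O : valid_output beta O -> Permutation D (x :: D') ->
  ln (privtree_prob dom D lam theta delta O / privtree_prob dom D' lam theta delta O)
  <= (1 + / (1 - exp (- delta / lam))) / lam.
Proof.
  intros O_valid Hperm. rewrite privtree_log_ratio.
  set (excess v := INR (cnt dom D v) - INR (depth v) * delta - theta).
  set (h v := lap_logcdf lam (Rmax (- delta) (excess v)) - lap_logcdf lam (Rmax (- delta) (excess v - 1))).
  assert (h_nonneg : forall v, 0 <= h v).
  { intros v. unfold h.
    assert (Hle : Rmax (- delta) (excess v - 1) <= Rmax (- delta) (excess v))
      by (apply Rle_max_compat_l; lra).
    pose proof (lap_logcdf_le lam lam_pos _ _ Hle). lra. }
  apply Rle_trans with (rsum (fun v => if dom v x then h v else 0) O).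
  - apply rsum_le. intros v _. unfold node_loss.
    pose proof (bval_insert D' D x v Hperm) as Hb.
    eapply Rle_trans; [apply (lap_logcdf_signed_le lam lam_pos); lra |].
    destruct (dom v x) eqn:Hx.
    + pose proof (cnt_insert dom D' D x v Hperm) as Hcnt. rewrite Hx in Hcnt.
      rewrite !bval_sub_theta. unfold h, excess.
      replace (INR (cnt dom D' v) - INR (depth v) * delta - theta)
        with (INR (cnt dom D v) - INR (depth v) * delta - theta - 1) by lra.
      lra.
    + replace (bval dom D theta delta v) with (bval dom D' theta delta v) by lra. lra.
  - set (N := list_max (map (@length nat) O)).
    eapply Rle_trans.
    { apply (rsum_x_nodes_le T beta dom x scheme O O_valid h N h_nonneg).
      intros v Hv.
      assert (Hall : Forall (fun k => (k <= N)%nat) (map (@length nat) O)) by (apply list_max_le; lia).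
      rewrite Forall_forall in Hall. apply Hall, in_map, Hv. }
    apply (sum_lap_logcdf_decreasing_le lam lam_pos delta delta_pos (fun n => excess (x_path T beta dom x n))).
    intros n. unfold excess, depth. rewrite !x_path_length, S_INR. simpl x_path.
    destruct scheme as [_ [_ [Hparent _]]].
    set (v := x_path T beta dom x n).
    pose proof (le_INR _ _ (cnt_le_subdomain dom D v (v ++ [x_branch T beta dom x v]) (Hparent _ _))).
    lra.
Qed.

End PrivTree.

Lemma privacy_constant_eq g : 0 < g ->
  1 + / (1 - exp (- g)) = (2 * exp g - 1) / (exp g - 1).
Proof.
  intros Hg. assert (1 < exp g) by (rewrite <- exp_0; now apply exp_increasing).
  rewrite exp_Ropp. field. lra.
Qed.

Theorem theorem1 (T : Type) (beta : nat) (dom : node -> T -> bool)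
  (gamma eps lam theta delta : R) :
  splitting_scheme beta dom ->
  0 < gamma -> 0 < eps ->
  lam >= (2 * exp gamma - 1) / (exp gamma - 1) * / eps ->
  delta = gamma * lam ->
  forall (D D' : list T) (x : T),
    (Permutation D' (x :: D) \/ Permutation D (x :: D')) ->
    forall O : list node, valid_output beta O ->
      ln (privtree_prob dom D lam theta delta O /
          privtree_prob dom D' lam theta delta O) <= eps.
Proof.
  intros scheme gamma_pos eps_pos lam_ge delta_eq D D' x neighbors O O_valid.
  pose proof (privacy_constant_eq gamma gamma_pos) as C_eq.
  set (C := (2 * exp gamma - 1) / (exp gamma - 1)) in *.
  assert (C_ge_1 : 1 <= C).
  { pose proof (exp_neg_lt_1 gamma gamma_pos). pose proof (exp_pos (- gamma)).
    pose proof (Rinv_0_lt_compat (1 - exp (- gamma)) ltac:(lra)). lra. }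
  assert (inv_eps_pos : 0 < / eps) by now apply Rinv_0_lt_compat.
  assert (lam_pos : 0 < lam) by nra.
  assert (C_div_lam_le : C / lam <= eps).
  { assert (C <= lam * eps).
    { replace C with (C * / eps * eps) by (field; lra). apply Rmult_le_compat_r; lra. }
    apply (Rmult_le_reg_r lam); [assumption |].
    unfold Rdiv. rewrite Rmult_assoc, Rinv_l by lra. lra. }
  destruct neighbors as [Hins | Hrem].
  - eapply Rle_trans; [exact (privtree_loss_insert T beta dom lam theta delta scheme lam_pos D D' x O O_valid Hins) |].
    apply Rle_trans with (C / lam); [| assumption].
    unfold Rdiv. rewrite <- (Rmult_1_l (/ lam)) at 1.
    apply Rmult_le_compat_r; [left; now apply Rinv_0_lt_compat | assumption].
  - assert (delta_pos : 0 < delta) by (subst; nra).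
    eapply Rle_trans; [exact (privtree_loss_remove T beta dom lam theta delta scheme lam_pos delta_pos D D' x O O_valid Hrem) |].
    replace (- delta / lam) with (- gamma) by (subst; field; lra).
    now rewrite C_eq.
Qed.
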